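(* Let $\mathcal K$ be an abstract Krivine structure and let $\mathcal A_{\mathcal K\bullet}=(\mathcal P_\bullet(\Pi),\circ_\bullet,\to_\bullet,\supseteq,\mathsf k_\bullet,\mathsf s_\bullet,\Phi)$ as defined below. On $\mathcal P_\bullet(\Pi)$ consider the relation $\sqsubseteq_\bullet$: $Q\sqsubseteq_\bullet R$ iff there is $t\in\mathrm{QP}$ with $t\perp Q\to_\bullet R$; and the relation $\sqsubseteq_{\mathcal A}$: $Q\sqsubseteq_{\mathcal A}R$ iff there is $F\in\Phi$ with $F\circ_\bullet Q\supseteq R$. Then these two relations coincide, so $\mathcal H_{\mathcal K\bullet}=(\mathcal P_\bullet(\Pi),\sqsubseteq_\bullet)$ and the preorder $\mathcal H_{\mathcal A_{\mathcal K\bullet}}=(\mathcal P_\bullet(\Pi),\sqsubseteq_{\mathcal A})$ are isomorphic; in particular $\mathcal H_{\mathcal K\bullet}$ is a Heyting preorder.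
   Context: An abstract Krivine structure $\mathcal K$ consists of sets $\Lambda,\Pi$, a relation $\perp\subseteq\Lambda\times\Pi$ ($t\perp P$ means $t\perp\pi$ for all $\pi\in P$), a map $\mathrm{push}$ written $t\cdot\pi$ (associating to the right), an application $ts$ on $\Lambda$ (associating to the left), a subset $\mathrm{QP}\subseteq\Lambda$ closed under application, and $\mathsf K,\mathsf S\in\mathrm{QP}$ with: $t\perp s\cdot\pi\Rightarrow ts\perp\pi$; $t\perp\pi\Rightarrow\mathsf K\perp t\cdot s\cdot\pi$; $tu(su)\perp\pi\Rightarrow\mathsf S\perp t\cdot s\cdot u\cdot\pi$. Polars: $L^\perp=\{\pi:\forall t\in L,\ t\perp\pi\}$, ${}^\perp P=\{t:\forall\pi\in P,\ t\perp\pi\}$; $\overline P=({}^\perp P)^\perp$; $\widehat P=\bigcup_{\pi\in P}\overline{\{\pi\}}$; $\mathcal P_\bullet(\Pi)=\{P:\widehat P=P\}$. For $P,Q\subseteq\Pi$: $P\to_\bullet Q=\widehat{\{t\cdot\pi:t\in{}^\perp P,\pi\in Q\}}$, $P\circ_\bullet Q=\{\pi: t\cdot\pi'\in P\ \forall t\in{}^\perp Q,\ \pi'\in\overline{\{\pi\}}\}$. $\mathsf E=\mathsf S(\mathsf K(\mathsf S\mathsf K\mathsf K))$, $\mathsf B=\mathsf S(\mathsf K\mathsf S)\mathsf K$, $\mathsf k_\bullet=\{\mathsf E\mathsf K\}^\perp$, $\mathsf s_\bullet=\{\mathsf E((\mathsf B\mathsf E)\mathsf S)\}^\perp$, $\Phi=\{P\in\mathcal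 P_\bullet(\Pi):\exists t\in\mathrm{QP},\ t\perp P\}$. $\mathcal A_{\mathcal K\bullet}$ is a full adjunction implicative ordered combinatory algebra with order $P\le Q\iff P\supseteq Q$, and its associated Heyting preorder has underlying preorder $\sqsubseteq_{\mathcal A}$, meet $a\wedge b=\mathsf p\circ_\bullet a\circ_\bullet b$ (with $\mathsf p$ the pairing combinator $\lambda^*x\lambda^*y\lambda^*z.zxy$ built from $\mathsf k_\bullet,\mathsf s_\bullet$) and implication $\to_\bullet$. A Heyting preorder is a preorder with finite meets ($\wedge$, top $\top$) and a binary operation $\to$ with $a\wedge b\le c\iff a\le b\to c$. *)

Record AKS : Type := {
  Lam : Type;
  Pi : Type;
  perp : Lam -> Pi -> Prop;
  push : Lam -> Pi -> Pi;
  app : Lam -> Lam -> Lam;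
  QP : Lam -> Prop;
  Kc : Lam;
  Sc : Lam;
  QP_app : forall t s, QP t -> QP s -> QP (app t s);
  QP_K : QP Kc;
  QP_S : QP Sc;
  ax_push : forall t s pi, perp t (push s pi) -> perp (app t s) pi;
  ax_K : forall t s pi, perp t pi -> perp Kc (push t (push s pi));
  ax_S : forall t s u pi,
      perp (app (app t u) (app s u)) pi -> perp Sc (push t (push s (push u pi)))
}.

Section Defs.
Variable K : AKS.
Notation Lam := (Lam K).
Notation Pi := (Pi K).

Definition perpset (t : Lam) (P : Pi -> Prop) : Prop :=
  forall pi, P pi -> perp K t pi.
Definition lpolar (P : Pi -> Prop) : Lam -> Prop := fun t => perpset t P.
Definition rpolar (L : Lam -> Prop) : Pi -> Prop :=
  fun pi => forall t, L t -> perp K t pi.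
Definition bar (P : Pi -> Prop) : Pi -> Prop := rpolar (lpolar P).
Definition hat (P : Pi -> Prop) : Pi -> Prop :=
  fun pi => exists pi', P pi' /\ bar (fun x => x = pi') pi.
Definition inPb (P : Pi -> Prop) : Prop := forall pi, hat P pi <-> P pi.

Definition arrowb (P Q : Pi -> Prop) : Pi -> Prop :=
  hat (fun pi => exists t pi', lpolar P t /\ Q pi' /\ pi = push K t pi').
Definition circb (P Q : Pi -> Prop) : Pi -> Prop :=
  fun pi => forall t pi', lpolar Q t -> bar (fun x => x = pi) pi' ->
                          P (push K t pi').

Definition Phib (P : Pi -> Prop) : Prop :=
  inPb P /\ exists t, QP K t /\ perpset t P.

Definition sqle_b (Q R : Pi -> Prop) : Prop :=
  exists t, QP K t /\ perpset t (arrowb Q R).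
Definition sqle_A (Q R : Pi -> Prop) : Prop :=
  exists F, Phib F /\ (forall pi, R pi -> circb F Q pi).

Definition HeytingPreorder (le : (Pi -> Prop) -> (Pi -> Prop) -> Prop) : Prop :=
  (forall a, inPb a -> le a a) /\
  (forall a b c, inPb a -> inPb b -> inPb c -> le a b -> le b c -> le a c) /\
  (exists top, inPb top /\ forall a, inPb a -> le a top) /\
  (exists meet imp : (Pi -> Prop) -> (Pi -> Prop) -> (Pi -> Prop),
     (forall a b, inPb a -> inPb b -> inPb (meet a b)) /\
     (forall a b, inPb a -> inPb b -> inPb (imp a b)) /\
     (forall a b, inPb a -> inPb b -> le (meet a b) a) /\
     (forall a b, inPb a -> inPb b -> le (meet a b) b) /\
     (forall a b c, inPb a -> inPb b -> inPb c ->
        le c a -> le c b -> le c (meet a b)) /\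
     (forall a b c, inPb a -> inPb b -> inPb c ->
        (le (meet a b) c <-> le a (imp b c)))).

End Defs.

From Stdlib Require Import Setoid.

(* A realiser of [Q ->• R] is exactly a quasi-proof witnessing that the element
   [Q ->• R] of [Φ] satisfies [(Q ->• R) ∘• Q ⊇ R]; conversely the quasi-proof
   orthogonal to some [F ∈ Φ] with [F ∘• Q ⊇ R] is orthogonal to every [s · π]
   with [s ⊥ Q] and [π ∈ R], so both relations have the same witnesses.
   For the Heyting structure the top is the empty set, the implication is [->•],
   and the meet of [a] and [b] is the closure of the stacks [u · π] such that
   [u ⊥ s1 · s2 · π] whenever [s1 ⊥ a] and [s2 ⊥ b]; every required inequality is
   then realised by an explicit SK-combinator. *)

Section KrivineHeyting.
Variable K : AKS.
Local Notation "t ⊥ p" := (perp K t p) (at level 70).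
Local Notation "s · p" := (push K s p) (at level 60, right associativity).
Local Notation "t @ s" := (app K t s) (at level 40, left associativity).
Local Notation KK := (Kc K).
Local Notation SS := (Sc K).

Definition Icomb := SS @ KK @ KK.
Definition Bcomb := SS @ (KK @ SS) @ KK.
Definition Tcomb := SS @ (KK @ (SS @ Icomb)) @ KK.
Definition Pcomb := Bcomb @ (SS @ (Bcomb @ Bcomb @ Tcomb)) @ (Bcomb @ KK @ Tcomb).
Definition Ecomb t := SS @ (KK @ Icomb) @ t.

Ltac reduce := unfold Ecomb, Pcomb, Tcomb, Bcomb, Icomb;
  repeat (first [ assumption | apply ax_K | apply ax_S | apply ax_push ]).
Ltac quasi_proof := unfold Ecomb, Pcomb, Tcomb, Bcomb, Icomb;
  repeat (first [ assumption | apply QP_K | apply QP_S | apply QP_app ]).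

Lemma Icomb_perp t p : t ⊥ p -> Icomb ⊥ t · p.
Proof. intro H; reduce. Qed.

Lemma Bcomb_perp x y z p : x ⊥ (y @ z) · p -> Bcomb ⊥ x · y · z · p.
Proof. intro H; reduce. Qed.

Lemma Tcomb_perp t w p : w ⊥ (KK @ t @ w) · p -> Tcomb ⊥ t · w · p.
Proof. intro H; reduce. Qed.

Lemma Ecomb_perp t s p : t @ s ⊥ p -> Ecomb t ⊥ s · p.
Proof. intro H; reduce. Qed.

Lemma Kcomb_app_perp x w p : x ⊥ p -> KK @ x @ w ⊥ p.
Proof. intro H; reduce. Qed.

(* The two arguments of the pair reach [z] wrapped as [KK @ x @ _], which
   behaves like [x] on every stack. *)
Lemma Pcomb_perp x y z p :
  (forall w w', z ⊥ (KK @ x @ w) · (KK @ y @ w') · p) -> Pcomb ⊥ x · y · z · p.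
Proof. intro H; reduce; apply H. Qed.

Lemma bar_refl p : bar K (fun x => x = p) p.
Proof. intros t Ht; apply Ht; reflexivity. Qed.

Lemma hat_sub (P : Pi K -> Prop) p : P p -> hat K P p.
Proof. intro H; exists p; split; [exact H | apply bar_refl]. Qed.

Lemma perpset_hat P t : perpset K t P -> perpset K t (hat K P).
Proof. intros H p [p' [Hp' Hb]]; apply Hb; intros x ->; auto. Qed.

Lemma inPb_hat P : inPb K (hat K P).
Proof.
  intro p; split; [|apply hat_sub].
  intros [p1 [[p2 [H2 Hb2]] Hb1]]; exists p2; split; [exact H2|].
  intros t Ht; apply Hb1; intros x ->; apply Hb2; exact Ht.
Qed.

Lemma perpset_arrowbE Q R t :
  perpset K t (arrowb K Q R) <->
  forall s p, lpolar K Q s -> R p -> t ⊥ s · p.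
Proof.
  split.
  - intros H s p Hs Hp; apply H, hat_sub; eauto 6.
  - intros H; apply perpset_hat; intros p (s & p' & Hs & Hp & ->); auto.
Qed.

Lemma Ecomb_perpset_arrowb_hat Q X t :
  (forall s p, lpolar K Q s -> X p -> t ⊥ s · p) ->
  perpset K (Ecomb t) (arrowb K Q (hat K X)).
Proof.
  intros H; apply perpset_arrowbE; intros s p Hs [p' [Hp' Hb]].
  apply Ecomb_perp, Hb; intros x ->; apply ax_push; auto.
Qed.

Lemma circb_arrowb Q R p :
  inPb K R -> R p -> circb K (arrowb K Q R) Q p.
Proof.
  intros HR Hp s p' Hs Hb; apply hat_sub.
  exists s, p'; repeat split; [exact Hs|]; apply HR; exists p; auto.
Qed.

Lemma circb_push F Q s p : circb K F Q p -> lpolar K Q s -> F (s · p).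
Proof. intros H Hs; exact (H s p Hs (bar_refl p)). Qed.

Lemma sqle_b_iff_sqle_A Q R :
  inPb K R -> (sqle_b K Q R <-> sqle_A K Q R).
Proof.
  intros HR; split.
  - intros [t [Qt Ht]]; exists (arrowb K Q R); split.
    + split; [apply inPb_hat | eauto].
    + intros p Hp; apply circb_arrowb; assumption.
  - intros [F [[_ [u [Qu Hu]]] HF]]; exists u; split; [exact Qu|].
    apply perpset_arrowbE; intros s p Hs Hp; apply Hu, (circb_push F Q); auto.
Qed.

Lemma sqle_b_refl a : sqle_b K a a.
Proof.
  exists Icomb; split; [quasi_proof|].
  apply perpset_arrowbE; intros s p Hs Hp; apply Icomb_perp; auto.
Qed.

Lemma sqle_b_trans a b c : sqle_b K a b -> sqle_b K b c -> sqle_b K a c.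
Proof.
  intros [t1 [Q1 H1]] [t2 [Q2 H2]]; exists (Bcomb @ t2 @ t1); split; [quasi_proof|].
  rewrite perpset_arrowbE in H1, H2 |- *; intros s p Hs Hp.
  apply ax_push, ax_push, Bcomb_perp, H2; [intros p' Hp'; apply ax_push, H1 | ]; auto.
Qed.

Definition emptyPi : Pi K -> Prop := fun _ => False.

Lemma inPb_emptyPi : inPb K emptyPi.
Proof. intro p; split; [intros [p' [[] _]] | intros []]. Qed.

Lemma sqle_b_emptyPi a : sqle_b K a emptyPi.
Proof.
  exists KK; split; [apply QP_K|]; apply perpset_arrowbE; intros _ _ _ [].
Qed.

Definition meet_stacks (a b : Pi K -> Prop) : Pi K -> Prop := fun r =>
  exists u p, r = u · p /\
    forall s1 s2, lpolar K a s1 -> lpolar K b s2 -> u ⊥ s1 · s2 · p.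

Definition meetb a b := hat K (meet_stacks a b).

Lemma Tcomb_perpset_arrowb_meetb a b c t :
  (forall s1 s2 p, lpolar K a s1 -> lpolar K b s2 -> c p -> t ⊥ s1 · s2 · p) ->
  perpset K (Tcomb @ t) (arrowb K (meetb a b) c).
Proof.
  intros H; apply perpset_arrowbE; intros w p Hw Hp.
  apply ax_push, Tcomb_perp, Hw, hat_sub.
  exists (KK @ t @ w), p; split; [reflexivity|].
  intros s1 s2 H1 H2; apply Kcomb_app_perp, H; assumption.
Qed.

Lemma meetb_le_l a b : sqle_b K (meetb a b) a.
Proof.
  exists (Tcomb @ KK); split; [quasi_proof|].
  apply Tcomb_perpset_arrowb_meetb; intros s1 s2 p H1 _ Hp.
  apply ax_K, H1, Hp.
Qed.

Lemma meetb_le_r a b : sqle_b K (meetb a b) b.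
Proof.
  exists (Tcomb @ (KK @ Icomb)); split; [quasi_proof|].
  apply Tcomb_perpset_arrowb_meetb; intros s1 s2 p _ H2 Hp.
  apply ax_push, ax_K, Icomb_perp, H2, Hp.
Qed.

Lemma sqle_b_meetb a b c :
  sqle_b K c a -> sqle_b K c b -> sqle_b K c (meetb a b).
Proof.
  intros [t1 [Q1 H1]] [t2 [Q2 H2]].
  exists (Ecomb (SS @ (Bcomb @ Pcomb @ t1) @ t2)); split; [quasi_proof|].
  rewrite perpset_arrowbE in H1, H2.
  apply Ecomb_perpset_arrowb_hat; intros s r Hs (u & p & -> & Hu).
  apply ax_push, ax_push, ax_S.
  apply ax_push, ax_push, ax_push, ax_push, Bcomb_perp, Pcomb_perp; intros w w'.
  apply Hu; intros p' Hp'; apply Kcomb_app_perp, ax_push; auto.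
Qed.

Lemma sqle_b_curry a b c :
  sqle_b K (meetb a b) c -> sqle_b K a (arrowb K b c).
Proof.
  intros [t [Qt Ht]]; exists (Ecomb (Bcomb @ (Bcomb @ t) @ Pcomb)).
  split; [quasi_proof|]; rewrite perpset_arrowbE in Ht.
  apply Ecomb_perpset_arrowb_hat; intros s r Hs (s' & p & Hs' & Hp & ->).
  apply ax_push, ax_push, Bcomb_perp, ax_push, Bcomb_perp, Ht; [|exact Hp].
  apply perpset_hat; intros r' (u & p' & -> & Hu).
  apply ax_push, ax_push, Pcomb_perp; intros w w'.
  apply Hu; intros p'' Hp''; apply Kcomb_app_perp; auto.
Qed.

Lemma sqle_b_uncurry a b c :
  sqle_b K a (arrowb K b c) -> sqle_b K (meetb a b) c.
Proof.
  intros [t [Qt Ht]]; exists (Tcomb @ t); split; [quasi_proof|].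
  rewrite perpset_arrowbE in Ht.
  apply Tcomb_perpset_arrowb_meetb; intros s1 s2 p H1 H2 Hp.
  apply Ht, hat_sub; [exact H1|]; eauto 6.
Qed.

Lemma HeytingPreorder_sqle_b : HeytingPreorder K (sqle_b K).
Proof.
  split; [intros a _; apply sqle_b_refl|].
  split; [intros a b c _ _ _; apply sqle_b_trans|].
  split; [exists emptyPi; split; [apply inPb_emptyPi | intros a _; apply sqle_b_emptyPi]|].
  exists meetb, (arrowb K); split; [|split; [|split; [|split; [|split]]]].
  - intros a b _ _; apply inPb_hat.
  - intros a b _ _; apply inPb_hat.
  - intros a b _ _; apply meetb_le_l.
  - intros a b _ _; apply meetb_le_r.
  - intros a b c _ _ _; apply sqle_b_meetb.
  - intros a b c _ _ _; split; [apply sqle_b_curry | apply sqle_b_uncurry].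
Qed.

End KrivineHeyting.

Theorem mainTheorem10 (K : AKS) :
  (forall Q R : Pi K -> Prop, inPb K Q -> inPb K R ->
     (sqle_b K Q R <-> sqle_A K Q R)) /\
  HeytingPreorder K (sqle_b K).
Proof.
  split.
  - intros Q R _ HR; apply sqle_b_iff_sqle_A, HR.
  - apply HeytingPreorder_sqle_b.
Qed.
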